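(* Every self-residual wqo is transferable.
   Context: A wqo is a quasi-order with no infinite bad sequence. The width $\mathbf{w}(A)$ is the rank of the forest of nonempty finite sequences of pairwise incomparable elements of $A$ ordered by initial segment. For $x\in A$, $A_{\not\le x}=\{y\in A: y\not\le x\}$, and for $Y\subseteq A$, $A_{\not\le Y}=\bigcap_{x\in Y}A_{\not\le x}$ (equal to $A$ if $Y=\emptyset$), with the induced order. $A$ is self-residual if for every $x\in A$, $A_{\not\le x}$ contains a substructure isomorphic to $A$. $A$ is transferable if $\mathbf{w}(A_{\not\le Y})=\mathbf{w}(A)$ for every finite $Y\subseteq A$. *)

From Stdlib Require Import List.
Import ListNotations.
Set Implicit Arguments.

Section Defs.
Variable T : Type.
Variable le : T -> T -> Prop.

Definition quasi_order : Prop :=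
  (forall x, le x x) /\ (forall x y z, le x y -> le y z -> le x z).

Definition wqo : Prop :=
  quasi_order /\
  forall f : nat -> T, exists i j, i < j /\ le (f i) (f j).

Definition incomp (x y : T) : Prop := ~ le x y /\ ~ le y x.

(* Forest of nonempty finite sequences of pairwise incomparable elements of
   the substructure P, ordered by initial segment; we add the empty sequence
   as a virtual root.  [child P s t]: t is a one-element extension of s
   that is still a sequence of pairwise incomparable elements of P.
   The nodes reachable from [] are exactly the pairwise-incomparable
   sequences of elements of P. *)
Definition child (P : T -> Prop) (s t : list T) : Prop :=
  exists x, t = s ++ [x] /\ P x /\ Forall (fun y => incomp y x) s.

Definition not_below (x : T) : T -> Prop := fun y => ~ le y x.
Definition not_below_set (Y : list T) : T -> Prop :=
  fun y => forall x, In x Y -> ~ le y x.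

Definition self_residual : Prop :=
  forall x, exists f : T -> T,
    (forall a b, f a = f b -> a = b) /\
    (forall a, not_below x (f a)) /\
    (forall a b, le a b <-> le (f a) (f b)).
End Defs.

(* Comparison of ordinal ranks of nodes of two well-founded trees:
   rk(s) <= rk(u) iff every child s' of s has a child u' of u with
   rk(s') <= rk(u')  (since rk(s) = sup {rk(s')+1}). *)
Inductive rank_le (A B : Type) (cA : list A -> list A -> Prop)
    (cB : list B -> list B -> Prop) : list A -> list B -> Prop :=
| rank_le_intro s u :
    (forall s', cA s s' -> exists u', cB u u' /\ rank_le cA cB s' u') ->
    rank_le cA cB s u.

(* width w(P) <= w(Q): rank of the forest of P-antichain sequences
   (= rank of its virtual root []) is at most that of Q. *)
Definition width_le (T : Type) (le : T -> T -> Prop) (P Q : T -> Prop) : Prop :=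
  rank_le (child le P) (child le Q) [] [].

Definition width_eq (T : Type) (le : T -> T -> Prop) (P Q : T -> Prop) : Prop :=
  width_le le P Q /\ width_le le Q P.

Definition transferable (T : Type) (le : T -> T -> Prop) : Prop :=
  forall Y : list T, width_eq le (not_below_set le Y) (fun _ => True).

(* The width is monotone along order-reflecting maps, so w(A_{not <= Y}) <= w(A)
   is immediate and it suffices to reflect A into A_{not <= Y}.  By induction on
   Y, given such a map g for Y and an embedding f of A into A_{not <= y}, the map
   f^m o g works as soon as f^m maps each A_{not <= z} (z in Y) into itself.  Such
   an m >= 1 exists in a wqo: every c satisfies c <= f^p c for some p >= 1, and if
   for every m some b_m escaped (b_m not <= z, f^m b_m <= z), then along exponents
   M_0 | M_1 | ... chosen so that b_{M_i} <= f^{M_j} b_{M_i} for i < j, a good pair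
   b_{M_i} <= b_{M_j} would give b_{M_i} <= f^{M_j} b_{M_j} <= z. *)
From Stdlib Require Import List Lia Arith Classical IndefiniteDescription.
Import ListNotations.
Set Implicit Arguments.

Lemma not_Acc_descending_chain (A : Type) (R : A -> A -> Prop) (a : A) :
  ~ Acc R a -> exists h : nat -> A, forall n, R (h (S n)) (h n).
Proof.
  intro Ha.
  assert (step : forall x : {x | ~ Acc R x},
             exists y : {y | ~ Acc R y}, R (proj1_sig y) (proj1_sig x)).
  { intros [x Hx]. apply NNPP; intro Hnone. apply Hx. constructor; intros y Hy.
    apply NNPP; intro Hy'. apply Hnone. now exists (exist _ y Hy'). }
  destruct (functional_choice _ step) as [next Hnext].
  exists (fun n => proj1_sig (Nat.iter n next (exist _ a Ha))).
  intro n. apply Hnext.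
Qed.

Lemma iter_mul (A : Type) (f : A -> A) k m x :
  Nat.iter (k * m) f x = Nat.iter k (Nat.iter m f) x.
Proof. induction k as [|k IH]; [reflexivity|]. simpl. now rewrite Nat.iter_add, IH. Qed.

Lemma iter_mul_invariant (A : Type) (f : A -> A) (Inv : A -> Prop) m :
  (forall x, Inv x -> Inv (Nat.iter m f x)) ->
  forall k x, Inv x -> Inv (Nat.iter (k * m) f x).
Proof. intros Hm k x Hx. rewrite iter_mul. now apply Nat.iter_invariant. Qed.

Fixpoint prod_chain (step : nat -> nat) (k : nat) : nat :=
  match k with
  | 0 => 1
  | S k => prod_chain step k * step (prod_chain step k)
  end.

Lemma prod_chain_pos (step : nat -> nat) :
  (forall m, 0 < step m) -> forall k, 0 < prod_chain step k.
Proof.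
  intros Hstep k. induction k as [|k IH]; simpl; [lia|].
  specialize (Hstep (prod_chain step k)). nia.
Qed.

Lemma prod_chain_multiple (step : nat -> nat) i j :
  i < j -> exists q, prod_chain step j = q * step (prod_chain step i).
Proof.
  induction j as [|j IH]; intro Hij; [lia|].
  destruct (Nat.eq_dec i j) as [->|Hne].
  - now exists (prod_chain step j).
  - destruct IH as [q Hq]; [lia|]. exists (q * step (prod_chain step j)).
    simpl. rewrite Hq. ring.
Qed.

Section Embeddings.
Variable T : Type.
Variable le : T -> T -> Prop.

Definition order_embedding (f : T -> T) : Prop :=
  forall a b, le a b <-> le (f a) (f b).

Definition order_reflecting (g : T -> T) : Prop :=
  forall a b, le (g a) (g b) -> le a b.

Lemma child_Acc (P : T -> Prop) :
  wqo le -> forall s, Acc (fun t s => child le P s t) s.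
Proof.
  intros [_ Hgood] s. apply NNPP; intro Hs.
  destruct (not_Acc_descending_chain Hs) as [h Hh].
  destruct (functional_choice (fun n y =>
             h (S n) = h n ++ [y] /\ Forall (fun y' => incomp le y' y) (h n)))
    as [x Hx].
  { intro n. destruct (Hh n) as [y [E [_ F]]]. eauto. }
  assert (Hin : forall i j, i < j -> In (x i) (h j)).
  { intros i j Hij. induction j as [|j IH]; [lia|].
    rewrite (proj1 (Hx j)). apply in_or_app.
    destruct (Nat.eq_dec i j) as [->|Hne]; [right; now left | left; apply IH; lia]. }
  destruct (Hgood x) as [i [j [Hij Hle]]].
  pose proof (proj2 (Hx j)) as Hinc. rewrite Forall_forall in Hinc.
  exact (proj1 (Hinc _ (Hin i j Hij)) Hle).
Qed.

Lemma rank_le_map (P P' : T -> Prop) (g : T -> T) :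
  order_reflecting g -> (forall a, P a -> P' (g a)) ->
  forall s, Acc (fun t s => child le P s t) s ->
  rank_le (child le P) (child le P') s (map g s).
Proof.
  intros Hg HP s Hacc. induction Hacc as [s _ IH]. constructor.
  intros s' Hs'. exists (map g s'). split; [|now apply IH].
  destruct Hs' as [x [-> [Px Hinc]]]. exists (g x). rewrite map_app.
  repeat split; auto. apply Forall_map. eapply Forall_impl; [|exact Hinc].
  intros y [Hyx Hxy]. split; intro H; eauto.
Qed.

Lemma width_le_map (P P' : T -> Prop) (g : T -> T) :
  wqo le -> order_reflecting g -> (forall a, P a -> P' (g a)) ->
  width_le le P P'.
Proof.
  intros Hw Hg HP. change (rank_le (child le P) (child le P') [] (map g [])).
  apply rank_le_map; [exact Hg | exact HP | now apply child_Acc].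
Qed.

Section Iteration.
Hypothesis Hwqo : wqo le.
Variable f : T -> T.
Hypothesis Hf : order_embedding f.

Lemma iter_order_embedding n : order_embedding (Nat.iter n f).
Proof.
  induction n as [|n IH]; intros a b; simpl; [tauto|]. rewrite (IH a b). apply Hf.
Qed.

Lemma recurrent c : exists p, 0 < p /\ le c (Nat.iter p f c).
Proof.
  destruct Hwqo as [_ Hgood].
  destruct (Hgood (fun k => Nat.iter k f c)) as [i [j [Hij Hle]]].
  exists (j - i). split; [lia|].
  replace j with (i + (j - i)) in Hle by lia. rewrite Nat.iter_add in Hle.
  now apply (iter_order_embedding i).
Qed.

Lemma recurrent_mul c p :
  le c (Nat.iter p f c) -> forall k, le c (Nat.iter (k * p) f c).
Proof.
  destruct Hwqo as [[Hrefl Htrans] _]. intros Hp k.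
  apply (iter_mul_invariant f (le c)); [|apply Hrefl].
  intros y Hy. eapply Htrans; [exact Hp|]. now apply iter_order_embedding.
Qed.

Lemma eventually_preserves_not_below z :
  exists m, 0 < m /\ forall b, not_below le z b -> not_below le z (Nat.iter m f b).
Proof.
  destruct Hwqo as [[_ Htrans] Hgood].
  apply NNPP; intro Hnone.
  assert (Hesc : forall m, 0 < m -> exists b, ~ le b z /\ le (Nat.iter m f b) z).
  { intros m Hm. apply NNPP; intro Hb. apply Hnone. exists m. split; [exact Hm|].
    intros b Hbz Hle. apply Hb. eauto. }
  destruct (Hesc 1 Nat.lt_0_1) as [b0 _].
  destruct (functional_choice (fun m b =>
             0 < m -> ~ le b z /\ le (Nat.iter m f b) z)) as [bad Hbad].
  { intro m. destruct (Nat.eq_dec m 0) as [->|Hm].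
    - exists b0. lia.
    - destruct (Hesc m) as [b Hb]; [lia|]. eauto. }
  destruct (functional_choice _ recurrent) as [per Hper].
  set (M := prod_chain (fun m => per (bad m))).
  assert (HM : forall k, 0 < M k) by (apply prod_chain_pos; intro; apply Hper).
  destruct (Hgood (fun k => bad (M k))) as [i [j [Hij Hle]]]. simpl in Hle.
  destruct (prod_chain_multiple (fun m => per (bad m)) Hij) as [q Hq].
  fold M in Hq.
  apply (proj1 (Hbad _ (HM i))).
  apply (Htrans _ (Nat.iter (M j) f (bad (M i)))).
  - rewrite Hq. apply recurrent_mul, Hper.
  - apply (Htrans _ (Nat.iter (M j) f (bad (M j)))).
    + now apply iter_order_embedding.
    + exact (proj2 (Hbad _ (HM j))).
Qed.

Lemma eventually_preserves_not_below_set (Y : list T) :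
  exists m, 0 < m /\
    forall b, not_below_set le Y b -> not_below_set le Y (Nat.iter m f b).
Proof.
  induction Y as [|z Y IH].
  - exists 1. split; [lia|]. intros b _ x [].
  - destruct IH as [mY [HmY HY]].
    destruct (eventually_preserves_not_below z) as [mz [Hmz Hz]].
    exists (mz * mY). split; [nia|]. intros b Hb.
    assert (Hbz : not_below le z b) by (apply Hb; now left).
    assert (HbY : not_below_set le Y b) by (intros x Hx; apply Hb; now right).
    intros x [<-|Hx].
    + rewrite Nat.mul_comm. now apply (iter_mul_invariant f (not_below le z)).
    + now apply (iter_mul_invariant f (not_below_set le Y)).
Qed.

End Iteration.

Lemma reflecting_into_not_below_set :
  wqo le -> self_residual le -> forall Y : list T,
    exists g, order_reflecting g /\ forall a, not_below_set le Y (g a).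
Proof.
  intros Hw Hsr Y. induction Y as [|y Y IH].
  - exists (fun a => a). split; [intros a b H; exact H | intros a x []].
  - destruct IH as [g [Hg HY]]. destruct (Hsr y) as [f [_ [Hfy Hf]]].
    destruct (eventually_preserves_not_below_set Hw Hf Y) as [m [Hm Hpres]].
    exists (fun a => Nat.iter m f (g a)). split.
    + intros a b H. now apply Hg, (iter_order_embedding Hf m).
    + intros a x [<-|Hx].
      * destruct m as [|m]; [lia|]. apply Hfy.
      * now apply Hpres.
Qed.

End Embeddings.

Theorem mainTheorem4 (T : Type) (le : T -> T -> Prop) :
  wqo le -> self_residual le -> transferable le.
Proof.
  intros Hw Hsr Y.
  destruct (reflecting_into_not_below_set Hw Hsr Y) as [g [Hg HY]].
  split.
  - exact (width_le_map _ _ Hw (fun a b H => H) (fun a _ => I)).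
  - exact (width_le_map _ _ Hw Hg (fun a _ => HY a)).
Qed.
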